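(* Sufficiency and separation are not incrementally conservative fairness measures. Precisely: there exist binary random variables $Y, A$ and two binary predictors $R, R'$ of $Y$, defined on the same population (so that the joint distribution of $(Y,A)$ is the same in both cases), such that $R$ satisfies both sufficiency ($Y \perp A \mid R$) and separation ($R \perp A \mid Y$), $R'$ has strictly higher accuracy than $R$, i.e. $P(R'=Y) > P(R=Y)$, and yet $R'$ satisfies neither sufficiency ($Y \perp A \mid R'$ fails) nor separation ($R' \perp A \mid Y$ fails).
   Context: Setting: $Y$ is the true label, $R$ is a prediction of $Y$, and $A$ is a group-membership variable, all random variables on a common probability space. $X \perp Z$ denotes independence, $P(X,Z)=P(X)P(Z)$; $X \perp Z \mid W$ denotes conditional independence, $P(X \mid Z, W) = P(X \mid W)$. A predictor $R$ satisfies sufficiency if $Y \perp A \mid R$, and separation if $R \perp A \mid Y$. The accuracy of a predictor $R$ is the degree to which it agrees with $Y$, i.e. $P(R=Y)$. A fairness measure is called incrementally conservative if the degree to which the measure is satisfied does not decrease when the accuracy of the predictor is increased; in particular, failure of incremental conservativeness is witnessed by a predictor satisfying the measure exactly together with a more accurate predictor that no longer satisfies it. *)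

From HB Require Import structures.
From mathcomp Require Import all_boot all_order all_algebra.
Set Implicit Arguments. Unset Strict Implicit. Unset Printing Implicit Defensive.
Import Order.TTheory GRing.Theory Num.Theory.
Local Open Scope ring_scope.

Section Prob.
Variables (F : realFieldType) (Omega : finType).

Definition is_prob (P : {ffun Omega -> F}) : Prop :=
  (forall w, 0 <= P w) /\ \sum_(w : Omega) P w = 1.

Definition Pr (P : {ffun Omega -> F}) (E : pred Omega) : F :=
  \sum_(w : Omega | E w) P w.

Definition cond_indep (TX TZ TW : eqType) (P : {ffun Omega -> F})
    (X : Omega -> TX) (Z : Omega -> TZ) (W : Omega -> TW) : Prop :=
  forall (x : TX) (z : TZ) (w : TW),
    0 < Pr P [pred o | (Z o == z) && (W o == w)] ->
    Pr P [pred o | [&& X o == x, Z o == z & W o == w]]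
      / Pr P [pred o | (Z o == z) && (W o == w)]
    = Pr P [pred o | (X o == x) && (W o == w)] / Pr P [pred o | W o == w].

Definition sufficiency (TY TA TR : eqType) (P : {ffun Omega -> F})
    (Y : Omega -> TY) (A : Omega -> TA) (R : Omega -> TR) : Prop :=
  cond_indep P Y A R.
Definition separation (TY TA TR : eqType) (P : {ffun Omega -> F})
    (Y : Omega -> TY) (A : Omega -> TA) (R : Omega -> TR) : Prop :=
  cond_indep P R A Y.

Definition accuracy (T : eqType) (P : {ffun Omega -> F})
    (R Y : Omega -> T) : F :=
  Pr P [pred o | R o == Y o].

End Prob.

(** Under the uniform distribution every probability is a proportion, so
    conditional independence becomes a counting condition that can be checked
    point by point.  Take the uniform population [bool * bool] of pairs
    [(Y, A)], so that [Y] and [A] are independent fair coins.  The constant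
    predictor [R = false] satisfies separation trivially and sufficiency
    because [Y] and [A] are independent.  The predictor [R' = Y && ~~ A] errs
    only on the quarter [Y = A = true], so it is more accurate, but its errors
    all fall in the group [A = true], which breaks both criteria. *)
From HB Require Import structures.
From mathcomp Require Import all_boot all_order all_algebra.
From mathcomp Require Import zify.
Import Order.TTheory GRing.Theory Num.Theory.
Local Open Scope ring_scope.

Section Uniform.
Variables (F : realFieldType) (T : finType).

Definition unif : {ffun T -> F} := [ffun _ => #|T|%:R^-1].

Lemma Pr_unif (E : pred T) : Pr unif E = #|E|%:R / #|T|%:R.
Proof.
rewrite /Pr (eq_bigr (fun=> #|T|%:R^-1)) => [|w _]; last by rewrite ffunE.
by rewrite sumr_const [RHS]mulr_natl.
Qed.

Lemma unif_is_prob : (0 < #|T|)%N -> is_prob unif.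
Proof.
move=> T_gt0; split=> [w|]; first by rewrite ffunE invr_ge0 ler0n.
have := Pr_unif xpredT; rewrite /Pr => ->.
by rewrite cardT -cardE divff // pnatr_eq0 -lt0n.
Qed.

Lemma ltr_Pr_unif (E E' : pred T) :
  (0 < #|T|)%N -> (Pr unif E < Pr unif E') = (#|E| < #|E'|)%N.
Proof. by move=> T_gt0; rewrite !Pr_unif ltr_pM2r ?ltr_nat ?invr_gt0 ?ltr0n. Qed.

Lemma Pr_unif_gt0 (E : pred T) : (0 < Pr unif E) = (0 < #|E|)%N.
Proof.
rewrite Pr_unif; have [->|E_gt0] := posnP #|E|; first by rewrite mul0r ltxx.
have T_gt0 : (0 < #|T|)%N by apply: leq_trans E_gt0 (max_card _).
by rewrite divr_gt0 ?ltr0n.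
Qed.

Lemma ratio_Pr_unif (E E' : pred T) :
  (0 < #|E'|)%N -> Pr unif E / Pr unif E' = #|E|%:R / #|E'|%:R.
Proof.
move=> E'_gt0; have T_gt0 : (0 < #|T|)%N by apply: leq_trans E'_gt0 (max_card _).
by rewrite !Pr_unif invf_div mulrA divfK // pnatr_eq0 -lt0n.
Qed.

Lemma eq_ratio_Pr_unifP (E1 E2 E3 E4 : pred T) : {subset E2 <= E4} ->
  (0 < Pr unif E2 -> Pr unif E1 / Pr unif E2 = Pr unif E3 / Pr unif E4) <->
  ((0 < #|E2|)%N -> #|E1| * #|E4| = #|E3| * #|E2|)%N.
Proof.
move=> sub24; have cross_mul : (0 < #|E2|)%N ->
    (Pr unif E1 / Pr unif E2 == Pr unif E3 / Pr unif E4)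
    = (#|E1| * #|E4| == #|E3| * #|E2|)%N.
  move=> E2_gt0; have E4_gt0 : (0 < #|E4|)%N.
    by apply: leq_trans E2_gt0 (subset_leq_card _); apply/subsetP.
  by rewrite !ratio_Pr_unif // eqr_div ?pnatr_eq0 -?lt0n // -!natrM eqr_nat.
split=> eq_ratio E2_gt0; apply/eqP.
  by rewrite -cross_mul //; apply/eqP/eq_ratio; rewrite Pr_unif_gt0.
by rewrite cross_mul -?Pr_unif_gt0 //; apply/eqP/eq_ratio; rewrite -Pr_unif_gt0.
Qed.

Lemma cond_indep_unifP (TX TZ TW : eqType)
    (X : T -> TX) (Z : T -> TZ) (W : T -> TW) :
  cond_indep unif X Z W <->
  forall x z w, (0 < #|[pred o | (Z o == z) && (W o == w)]|)%N ->
    (#|[pred o | [&& X o == x, Z o == z & W o == w]]| * #|[pred o | W o == w]|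
     = #|[pred o | (X o == x) && (W o == w)]|
       * #|[pred o | (Z o == z) && (W o == w)]|)%N.
Proof.
have ZW_sub_W z w : {subset [pred o | (Z o == z) && (W o == w)] <= [pred o | W o == w]}.
  by move=> o /andP[].
by split=> indep x z w; apply/(eq_ratio_Pr_unifP _ _ _ _ (ZW_sub_W z w))/indep.
Qed.

End Uniform.

Lemma card_pred_bool2 (E : pred (bool * bool)) :
  #|E| = (E (false, false) + E (false, true) + E (true, false) + E (true, true))%N.
Proof.
rewrite -sum1_card big_mkcond /=.
rewrite (eq_bigr (fun p => (fun x1 x2 => (E (x1, x2) : nat)) p.1 p.2)) => [|[x1 x2] _].
  by rewrite -(pair_bigA _ (fun x1 x2 => (E (x1, x2) : nat))) !big_bool /=; lia.
by rewrite /in_mem /=; case: (E _).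
Qed.

Theorem proposition2p8 (F : realFieldType) :
  exists (Omega : finType) (P : {ffun Omega -> F})
         (Y A R R' : Omega -> bool),
    is_prob P /\
    sufficiency P Y A R /\ separation P Y A R /\
    accuracy P R Y < accuracy P R' Y /\
    ~ sufficiency P Y A R' /\ ~ separation P Y A R'.
Proof.
exists (bool * bool)%type, (unif F _), fst, snd, (fun=> false), (fun o => o.1 && ~~ o.2).
split; first by apply: unif_is_prob; rewrite card_prod card_bool.
split; first by apply/cond_indep_unifP => -[] [] []; rewrite !card_pred_bool2.
split; first by apply/cond_indep_unifP => -[] [] []; rewrite !card_pred_bool2.
split; first by rewrite /accuracy ltr_Pr_unif !card_pred_bool2.
split; first by move/cond_indep_unifP/(_ true true false); rewrite !card_pred_bool2 => /(_ isT).
by move/cond_indep_unifP/(_ true true true); rewrite !card_pred_bool2 => /(_ isT).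
Qed.
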